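(* Let $\mathbf{X}\in\{0,1\}^{m\times n}$ and let $Q\subsetneq\mathrm{supp}(\mathbf{X})$ be nonempty. If the generalised binary matrix $\mathbf{X}^Q$ is minimally non-firm and $\mathbf{X}^P$ is firm for every $P\subsetneq Q$, then $\mathcal{S}^Q(\mathbf{X})\in\{0,1\}^{(m+|Q|)\times(n+|Q|)}$ is minimally non-firm.
   Context: A generalised binary matrix is a matrix with entries in $\{0,1,?\}$; a standard binary matrix has entries in $\{0,1\}$. For such $\mathbf{Y}$, $\mathrm{supp}(\mathbf{Y})=\{(i,j):y_{i,j}=1\}$. A submatrix indexed by $I\times J$ is obtained by deleting rows not in $I$ and columns not in $J$; it is proper if it omits at least one row or column. A rectangle of $\mathbf{Y}$ is a set $I\times J$ of positions containing no entry equal to $0$. An isolated set is a subset of $\mathrm{supp}(\mathbf{Y})$ no two distinct elements of which lie in a common rectangle; $i(\mathbf{Y})$ is the maximum size of an isolated set; $br(\mathbf{Y})$ is the minimum number of rectangles whose union contains $\mathrm{supp}(\mathbf{Y})$ ($?$ entries need not be covered). $\mathbf{Y}$ is firm if $i(\mathbf{Y}')=br(\mathbf{Y}')$ for every submatrix $\mathbf{Y}'$ including $\mathbf{Y}$; $\mathbf{Y}$ is minimally non-firm if $i(\mathbf{Y})<br(\mathbf{Y})$ and $i(\mathbf{Y}')=br(\mathbf{Y}')$ for every proper submatrix $\mathbf{Y}'$. For $\mathbf{X}\in\{0,1\}^{m\times n}$ and $P\subseteq\mathrm{supp}(\mathbf{X})$, $\mathbf{X}^P$ is the generalised binary matrix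 obtained from $\mathbf{X}$ by replacing every entry in $P$ by $?$ (so $\mathbf{X}^\emptyset=\mathbf{X}$). Stretching: for nonempty $Q=\{(\ell_1,k_1),\dots,(\ell_q,k_q)\}\subseteq\mathrm{supp}(\mathbf{X})$ listed in lexicographic order (row index, then column index), $\mathcal{S}^Q(\mathbf{X})$ is the $(m+q)\times(n+q)$ binary matrix whose top-left $m\times n$ block is $\mathbf{X}$, whose entries at $(\ell_t,n+t)$, $(m+t,k_t)$, $(m+t,n+t)$ equal $1$ for each $t\in[q]$, and all of whose other entries are $0$. *)

From mathcomp Require Import all_boot.
Set Implicit Arguments. Unset Strict Implicit. Unset Printing Implicit Defensive.
From mathcomp Require Import all_algebra.

(* Entries of a generalised binary matrix: 0, 1, ? *)
Inductive gbit := G0 | G1 | GQ.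
Definition is0 (x : gbit) : bool := if x is G0 then true else false.
Definition is1 (x : gbit) : bool := if x is G1 then true else false.

Notation gmat m n := 'M[gbit]_(m, n).

Section Defs.
Variables (m n : nat).

Definition supp (Y : gmat m n) : {set 'I_m * 'I_n} :=
  [set p | is1 (Y p.1 p.2)].

Definition inR (p : 'I_m * 'I_n) (R : {set 'I_m} * {set 'I_n}) : bool :=
  (p.1 \in R.1) && (p.2 \in R.2).

Definition rect (Y : gmat m n) (R : {set 'I_m} * {set 'I_n}) : bool :=
  [forall i in R.1, forall j in R.2, ~~ is0 (Y i j)].

Definition isolated (Y : gmat m n) (S : {set 'I_m * 'I_n}) : bool :=
  (S \subset supp Y) &&
  [forall s in S, forall t in S,
     (s != t) ==> ~~ [exists R, rect Y R && inR s R && inR t R]].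

Definition isol_num (Y : gmat m n) : nat :=
  \max_(S : {set 'I_m * 'I_n} | isolated Y S) #|S|.

Definition rect_cover (Y : gmat m n) (F : {set {set 'I_m} * {set 'I_n}}) : bool :=
  [forall R in F, rect Y R] && [forall p in supp Y, exists R in F, inR p R].

(* br(Y): minimum number of rectangles covering supp Y.  The default value
   #|supp Y| is attained by the cover by singleton rectangles, so this is
   exactly the minimum. *)
Definition br (Y : gmat m n) : nat :=
  \big[minn/#|supp Y|]_(F : {set {set 'I_m} * {set 'I_n}} | rect_cover Y F) #|F|.

End Defs.

(* submatrix indexed by I x J (rows/columns kept in increasing order) *)
Definition submx (m n : nat) (Y : gmat m n) (I : {set 'I_m}) (J : {set 'I_n})
  : gmat #|I| #|J| :=
  \matrix_(a < #|I|, b < #|J|) Y (enum_val a) (enum_val b).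

Definition firm (m n : nat) (Y : gmat m n) : Prop :=
  forall (I : {set 'I_m}) (J : {set 'I_n}),
    isol_num (submx Y I J) = br (submx Y I J).

Definition minimally_nonfirm (m n : nat) (Y : gmat m n) : Prop :=
  isol_num Y < br Y /\
  forall (I : {set 'I_m}) (J : {set 'I_n}),
    (I != setT) || (J != setT) ->
    isol_num (submx Y I J) = br (submx Y I J).

Definition bsupp (m n : nat) (X : 'M[bool]_(m, n)) : {set 'I_m * 'I_n} :=
  [set p | X p.1 p.2].

(* X^P : replace the entries in P by ? (X^set0 is X viewed as generalised) *)
Definition qmark (m n : nat) (X : 'M[bool]_(m, n)) (P : {set 'I_m * 'I_n})
  : gmat m n :=
  \matrix_(i, j) (if (i, j) \in P then GQ else if X i j then G1 else G0).

Definition lexle (m n : nat) (p q : 'I_m * 'I_n) : bool :=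
  (p.1 < q.1) || ((p.1 == q.1) && (p.2 <= q.2)).

(* Q listed in lexicographic order: (l_1,k_1), ..., (l_q,k_q) *)
Definition lexlist (m n : nat) (Q : {set 'I_m * 'I_n}) : seq ('I_m * 'I_n) :=
  sort (@lexle m n) (enum Q).

(* the t-th element (0-based) of the list, as an option *)
Definition qnth (m n : nat) (Q : {set 'I_m * 'I_n}) (t : nat) : option ('I_m * 'I_n) :=
  nth None [seq Some p | p <- lexlist Q] t.

Definition stretch (m n : nat) (X : 'M[bool]_(m, n)) (Q : {set 'I_m * 'I_n})
  : 'M[bool]_(m + #|Q|, n + #|Q|) :=
  \matrix_(r, c)
    match split r, split c with
    | inl i, inl j => X i j
    | inl i, inr t => omap fst (qnth Q t) == Some i
    | inr t, inl j => omap snd (qnth Q t) == Some j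
    | inr t, inr t' => t == t'
    end.

(* Both i and br make sense for any set U of positions that must be isolated
   resp. covered inside the nonzero pattern of a matrix; a ? entry is then a
   nonzero position outside U.  Call x a pendant of U over W, a subset of
   U minus x, if x and all positions of U outside W fit in one rectangle K
   while no position of W shares a rectangle with x: passing from U to W then
   lowers both i and br by exactly one.  In S^Q(X) the 1 at (m+t, n+t) is such
   a pendant, K being the all-ones 2x2 block on rows {l_t, m+t} and columns
   {k_t, n+t}; deleting it leaves (l_t, k_t) as a ?.  Hence on a submatrix
   whose gadget rows and gadget columns are indexed by the same set P, i and
   br are those of the corresponding submatrix of X^{Q_P} plus |P|.  These
   agree by firmness of X^{Q_P} when P <> Q and by minimal non-firmness of X^Q
   for a proper submatrix with P = Q, while i < br for the whole matrix.  If a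
   gadget row occurs without its column, it has at most one nonzero entry in
   the submatrix, so it is either a zero row or holds a pendant, and induction
   on the size of the submatrix concludes; symmetrically for columns. *)

From HB Require Import structures.
From mathcomp Require Import all_boot all_algebra.
Set Implicit Arguments. Unset Strict Implicit. Unset Printing Implicit Defensive.

(* Lets [bigD1] split the minimum defining [br]. *)
HB.instance Definition _ := SemiGroup.isComLaw.Build nat minn minnA minnC.

Lemma is1_nonzero (z : gbit) : is1 z -> ~~ is0 z.
Proof. by case: z. Qed.

Section Covers.
Variables (M N : nat) (Y : gmat M N).
Implicit Types (U W S : {set 'I_M * 'I_N}) (F : {set {set 'I_M} * {set 'I_N}}).
Implicit Types (I : {set 'I_M}) (J : {set 'I_N}) (K R : {set 'I_M} * {set 'I_N}).

Definition nonzero := [set p | ~~ is0 (Y p.1 p.2)].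
Definition supp_in I J := supp Y :&: setX I J.
Definition compatible s t := [exists R, rect Y R && inR s R && inR t R].
Definition indep S := [forall s in S, forall t in S, (s != t) ==> ~~ compatible s t].
Definition isol_on U :=
  \max_(S : {set 'I_M * 'I_N} | (S \subset U) && indep S) #|S|.
Definition covers U F :=
  [forall R in F, rect Y R] && [forall p in U, exists R in F, inR p R].
Definition br_on U :=
  \big[minn/#|U|]_(F : {set {set 'I_M} * {set 'I_N}} | covers U F) #|F|.
Definition balanced U := isol_on U = br_on U.

Lemma isol_num_supp : isol_num Y = isol_on (supp Y).
Proof. by []. Qed.

Lemma br_supp : br Y = br_on (supp Y).
Proof. by []. Qed.

Lemma supp_inE p I J :
  (p \in supp_in I J) = [&& is1 (Y p.1 p.2), p.1 \in I & p.2 \in J].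
Proof. by rewrite !inE. Qed.

Lemma supp_in_setT : supp_in setT setT = supp Y.
Proof. by apply/setP=> p; rewrite supp_inE !inE !andbT. Qed.

Lemma supp_in_nonzero I J : supp_in I J \subset nonzero.
Proof. by apply/subsetP=> p; rewrite supp_inE inE => /andP[/is1_nonzero]. Qed.

Lemma compatibleC s t : compatible s t = compatible t s.
Proof.
by apply/existsP/existsP=> -[R /andP[/andP[rR sR] tR]]; exists R; rewrite rR sR tR.
Qed.

Lemma rect_compatible R s t : rect Y R -> inR s R -> inR t R -> compatible s t.
Proof. by move=> rR sR tR; apply/existsP; exists R; rewrite rR sR tR. Qed.

Lemma rectP R : reflect {in R.1 & R.2, forall i j, ~~ is0 (Y i j)} (rect Y R).
Proof.
apply: (iffP forallP) => [h i j iR jR | h i].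
  by move/implyP: (h i) => /(_ iR) /forallP /(_ j) /implyP; apply.
by apply/implyP=> iR; apply/forallP=> j; apply/implyP => jR; apply: h.
Qed.

Lemma compatible_corner s t : compatible s t -> ~~ is0 (Y s.1 t.2).
Proof.
by case/existsP=> R /andP[/andP[/rectP rR /andP[s1 _]] /andP[_ t2]]; apply: rR.
Qed.

Lemma indepP S :
  reflect {in S &, forall s t, s != t -> ~~ compatible s t} (indep S).
Proof.
apply: (iffP forallP) => [h s t sS tS st | h s].
  by move/implyP: (h s) => /(_ sS) /forallP /(_ t); rewrite tS st.
apply/implyP=> sS; apply/forallP=> t; apply/implyP=> tS; apply/implyP; exact: h.
Qed.

Lemma indepS S1 S2 : S1 \subset S2 -> indep S2 -> indep S1.
Proof.
by move=> /subsetP sub /indepP h; apply/indepP=> s t sS tS; apply: h; apply: sub.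
Qed.

Lemma leq_isol_on U S : S \subset U -> indep S -> #|S| <= isol_on U.
Proof.
by move=> sU iS; apply: (@leq_bigmax_cond _ (fun S => (S \subset U) && indep S)); rewrite sU.
Qed.

Lemma isol_on_attained U :
  exists2 S : {set 'I_M * 'I_N}, (S \subset U) && indep S & #|S| = isol_on U.
Proof.
have [|S] := eq_bigmax_cond (fun S : {set 'I_M * 'I_N} => #|S|)
               (A := [pred S : {set 'I_M * 'I_N} | (S \subset U) && indep S]).
  by apply/card_gt0P; exists set0; rewrite inE sub0set; apply/indepP=> s t; rewrite inE.
by rewrite inE => sU e; exists S => //; exact: esym e.
Qed.

Lemma br_on_min U F : covers U F -> br_on U <= #|F|.
Proof. by move=> cF; rewrite /br_on (bigD1 F) //= geq_minl. Qed.

Lemma br_on_attained U : U \subset nonzero -> exists2 F, covers U F & #|F| = br_on U.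
Proof.
move=> Unz.
have [[F cF eF]|->] : (exists2 F, covers U F & #|F| = br_on U) \/ br_on U = #|U|.
- rewrite /br_on; elim/big_ind: _ => [|x y hx hy|F cF]; [by right| |by left; exists F].
  by rewrite /minn; case: (x < y).
- by exists F.
exists [set ([set p.1], [set p.2]) | p in U]; last first.
  by apply: card_in_imset => -[i j] [i' j'] _ _ [/set1_inj-> /set1_inj->].
apply/andP; split; apply/forallP.
  move=> R; apply/implyP=> /imsetP[p pU ->]; apply/rectP=> i j /set1P-> /set1P->.
  by move/subsetP: Unz => /(_ p pU); rewrite inE.
move=> p; apply/implyP=> pU; apply/existsP; exists ([set p.1], [set p.2]).
by rewrite imset_f //= /inR /= !inE !eqxx.
Qed.

Definition pendant U W x K :=
  [/\ x \in U, W \subset U :\ x, rect Y K,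
      forall s, s \in U :\: W -> inR s K & {in W, forall s, ~~ compatible x s}].

Section Pendant.
Variables (U W : {set 'I_M * 'I_N}) (x : 'I_M * 'I_N) (K : {set 'I_M} * {set 'I_N}).
Hypothesis pendantUW : pendant U W x K.

Let xU : x \in U. Proof. by case: pendantUW. Qed.
Let WUx : W \subset U :\ x. Proof. by case: pendantUW. Qed.
Let rectK : rect Y K. Proof. by case: pendantUW. Qed.
Let UWK s : s \in U :\: W -> inR s K. Proof. by case: pendantUW => _ _ _ /(_ s). Qed.
Let xW : {in W, forall s, ~~ compatible x s}. Proof. by case: pendantUW. Qed.

Let WU : W \subset U. Proof. exact: subset_trans WUx (subsetDl _ _). Qed.
Let xNW : x \notin W. Proof. by apply/negP=> /(subsetP WUx); rewrite !inE eqxx. Qed.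
Let xK : inR x K. Proof. by apply: UWK; rewrite inE xNW. Qed.

Lemma isol_on_pendant : isol_on U = (isol_on W).+1.
Proof.
apply/eqP; rewrite eqn_leq; apply/andP; split.
  have [S /andP[SU iS] <-] := isol_on_attained U.
  rewrite -(cardsID W S) -addn1 leq_add //.
    by apply: leq_isol_on; [exact: subsetIr | apply: indepS iS; exact: subsetIl].
  apply/card_le1_eqP=> s t; rewrite !inE => /andP[sW sS] /andP[tW tS].
  have ts : compatible t s.
    by apply: (rect_compatible rectK); apply: UWK; rewrite inE ?sW ?tW (subsetP SU).
  by apply/eqP; apply: contraT => st; move/indepP: iS => /(_ _ _ tS sS st); rewrite ts.
have [S /andP[SW iS] <-] := isol_on_attained W.
have xS : x \notin S by apply: contra xNW; apply/subsetP.
apply: (@leq_trans #|x |: S|); first by rewrite cardsU1 xS.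
apply: leq_isol_on; first by rewrite subUset sub1set xU (subset_trans SW).
apply/indepP=> s t; rewrite !inE => /orP[/eqP->|sS] /orP[/eqP->|tS] st.
- by rewrite eqxx in st.
- exact: xW (subsetP SW _ tS).
- by rewrite compatibleC; exact: xW (subsetP SW _ sS).
- by move/indepP: iS; apply.
Qed.

Hypothesis Unz : U \subset nonzero.

Lemma br_on_pendant : br_on U = (br_on W).+1.
Proof.
apply/eqP; rewrite eqn_leq; apply/andP; split.
  have [F /andP[/forallP rF /forallP cF] <-] := br_on_attained (subset_trans WU Unz).
  apply: (@leq_trans #|K |: F|); first apply: br_on_min.
    apply/andP; split; apply/forallP.
      by move=> R; rewrite !inE; case: eqP => [->|_ /=]; [rewrite rectK | exact: rF].
    move=> p; apply/implyP=> pU; apply/existsP; case pW: (p \in W).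
      move/implyP: (cF p) => /(_ pW) /existsP[R /andP[RF pR]].
      by exists R; rewrite !inE RF pR orbT.
    by exists K; rewrite !inE eqxx UWK // inE pW.
  by rewrite cardsU1 -add1n leq_add2r leq_b1.
have [F /andP[/forallP rF /forallP cF] <-] := br_on_attained Unz.
move/implyP: (cF x) => /(_ xU) /existsP[R /andP[RF xR]].
rewrite (cardsD1 R F) RF add1n ltnS; apply: br_on_min; apply/andP; split; apply/forallP.
  by move=> R'; apply/implyP; rewrite !inE => /andP[_ R'F]; move/implyP: (rF R'); apply.
move=> p; apply/implyP=> pW; have pU := subsetP WU _ pW.
move/implyP: (cF p) => /(_ pU) /existsP[R' /andP[R'F pR']]; apply/existsP; exists R'.
rewrite !inE R'F pR' !andbT; apply: contraNneq (xW pW) => eR.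
by rewrite eR in pR'; apply: (rect_compatible _ xR pR'); exact: (implyP (rF R) RF).
Qed.

End Pendant.

Lemma balanced_sparse_row I J r :
  r \in I -> #|[set j in J | ~~ is0 (Y r j)]| <= 1 ->
  balanced (supp_in (I :\ r) J) -> {in J, forall c, balanced (supp_in I (J :\ c))} ->
  balanced (supp_in I J).
Proof.
move=> rI /card_le1_eqP sparse balIr balJc.
have [/existsP[c /andP[cJ rc]]|no1] := boolP [exists c, (c \in J) && is1 (Y r c)].
  have onlyc j : j \in J -> ~~ is0 (Y r j) -> j = c.
    by move=> jJ rj; apply: sparse; rewrite inE ?jJ ?rj ?cJ ?is1_nonzero.
  have pend : pendant (supp_in I J) (supp_in I (J :\ c)) (r, c)
                ([set i | ~~ is0 (Y i c)], [set c]).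
    split=> [|||[i j]|[i j]]; rewrite ?supp_inE /= ?rc ?rI ?cJ //.
    - apply/subsetP=> -[i j]; rewrite ?inE ?supp_inE ?inE /=.
      case/and4P=> ij iI jc jJ.
      by rewrite xpair_eqE negb_and jc orbT ij iI jJ.
    - by apply/rectP=> i j; rewrite !inE => ic /eqP->.
    - rewrite ?inE ?supp_inE ?inE /= => /and4P[+ ij iI jJ].
      rewrite ij iI jJ andbT /= negbK => /eqP ejc.
      by rewrite /inR /= !inE -ejc eqxx (is1_nonzero ij).
    - rewrite !inE /= => /and4P[_ _ jc jJ].
      by apply: contra jc => /compatible_corner /= /(onlyc _ jJ)/eqP.
  rewrite /balanced (isol_on_pendant pend) (br_on_pendant pend (supp_in_nonzero _ _)).
  by rewrite (balJc _ cJ).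
suff -> : supp_in I J = supp_in (I :\ r) J by [].
apply/setP=> -[i j]; rewrite ?supp_inE ?inE /=; case: (eqVneq i r) => [->|//].
by rewrite rI andbC andbF; apply/negbTE/(existsPn no1).
Qed.

Lemma balanced_sparse_col I J c :
  c \in J -> #|[set i in I | ~~ is0 (Y i c)]| <= 1 ->
  balanced (supp_in I (J :\ c)) -> {in I, forall r, balanced (supp_in (I :\ r) J)} ->
  balanced (supp_in I J).
Proof.
move=> cJ /card_le1_eqP sparse balJc balIr.
have [/existsP[r /andP[rI rc]]|no1] := boolP [exists r, (r \in I) && is1 (Y r c)].
  have onlyr i : i \in I -> ~~ is0 (Y i c) -> i = r.
    by move=> iI ic; apply: sparse; rewrite inE ?iI ?ic ?rI ?is1_nonzero.
  have pend : pendant (supp_in I J) (supp_in (I :\ r) J) (r, c)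
                ([set r], [set j | ~~ is0 (Y r j)]).
    split=> [|||[i j]|[i j]]; rewrite ?supp_inE /= ?rc ?rI ?cJ //.
    - apply/subsetP=> -[i j]; rewrite ?inE ?supp_inE ?inE /=.
      case/and3P=> ij /andP[ir iI] jJ.
      by rewrite xpair_eqE negb_and ir ij iI jJ.
    - by apply/rectP=> i j; rewrite !inE => /eqP->.
    - rewrite ?inE ?supp_inE ?inE /= => /and4P[+ ij iI jJ].
      rewrite ij iI jJ !andbT /= negbK => /eqP eir.
      by rewrite /inR /= !inE -eir eqxx (is1_nonzero ij).
    - rewrite !inE /= => /and3P[_ /andP[ir iI] _].
      rewrite compatibleC; apply: contra ir.
      by move/compatible_corner=> /= /(onlyr _ iI)/eqP.
  rewrite /balanced (isol_on_pendant pend) (br_on_pendant pend (supp_in_nonzero _ _)).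
  by rewrite (balIr _ rI).
suff -> : supp_in I J = supp_in I (J :\ c) by [].
apply/setP=> -[i j]; rewrite ?supp_inE ?inE /=; case: (eqVneq j c) => [->|//].
by rewrite cJ andbT /= !andbF andbC; apply/negbTE; exact: (existsPn no1 i).
Qed.
End Covers.

Section Relabel.
Variables (m1 n1 m2 n2 : nat) (Y1 : gmat m1 n1) (Y2 : gmat m2 n2).
Variables (f : 'I_m1 -> 'I_m2) (g : 'I_n1 -> 'I_n2).
Hypotheses (f_inj : injective f) (g_inj : injective g).
Hypothesis zero_pattern : forall a b, is0 (Y1 a b) = is0 (Y2 (f a) (g b)).

Definition relabel (p : 'I_m1 * 'I_n1) := (f p.1, g p.2).

Lemma relabel_inj : injective relabel.
Proof. by move=> [a b] [a' b'] [/f_inj-> /g_inj->]. Qed.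

Lemma rect_imset (R : {set 'I_m1} * {set 'I_n1}) :
  rect Y1 R -> rect Y2 (f @: R.1, g @: R.2).
Proof.
move/rectP=> rR; apply/rectP=> _ _ /imsetP[a aR ->] /imsetP[b bR ->].
by rewrite -zero_pattern; apply: rR.
Qed.

Lemma rect_preimset (R : {set 'I_m2} * {set 'I_n2}) :
  rect Y2 R -> rect Y1 (f @^-1: R.1, g @^-1: R.2).
Proof.
move/rectP=> rR; apply/rectP=> a b; rewrite !inE => aR bR.
by rewrite zero_pattern; apply: rR.
Qed.

Lemma inR_imset p (R : {set 'I_m1} * {set 'I_n1}) :
  inR p R -> inR (relabel p) (f @: R.1, g @: R.2).
Proof. by case/andP=> p1 p2; rewrite /inR /= !imset_f. Qed.

Lemma inR_preimset p (R : {set 'I_m2} * {set 'I_n2}) :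
  inR (relabel p) R -> inR p (f @^-1: R.1, g @^-1: R.2).
Proof. by case/andP=> p1 p2; rewrite /inR /= !inE p1 p2. Qed.

Lemma compatible_relabel s t :
  compatible Y2 (relabel s) (relabel t) = compatible Y1 s t.
Proof.
apply/existsP/existsP=> -[R /andP[/andP[rR sR] tR]].
  by exists (f @^-1: R.1, g @^-1: R.2); rewrite rect_preimset // !inR_preimset.
by exists (f @: R.1, g @: R.2); rewrite rect_imset // !inR_imset.
Qed.

Lemma indep_relabel (S : {set 'I_m1 * 'I_n1}) : indep Y2 (relabel @: S) = indep Y1 S.
Proof.
apply/indepP/indepP=> iS.
  move=> s t sS tS st; rewrite -compatible_relabel.
  by apply: iS; rewrite ?imset_f // (inj_eq relabel_inj).
move=> _ _ /imsetP[s sS ->] /imsetP[t tS ->]; rewrite (inj_eq relabel_inj) => st.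
by rewrite compatible_relabel; apply: iS.
Qed.

Lemma isol_on_relabel (U : {set 'I_m1 * 'I_n1}) :
  isol_on Y2 (relabel @: U) = isol_on Y1 U.
Proof.
apply/eqP; rewrite eqn_leq; apply/andP; split.
  have [S /andP[SU iS] <-] := isol_on_attained Y2 (relabel @: U).
  have eS : relabel @: (U :&: relabel @^-1: S) = S.
    apply/setP=> p; apply/imsetP/idP => [[u]|pS].
      by rewrite !inE => /andP[_ uS] ->.
    have /imsetP[u uU pu] := subsetP SU p pS.
    by exists u; rewrite // !inE uU -pu.
  rewrite -{1}eS card_imset; last exact: relabel_inj.
  apply: leq_isol_on; first exact: subsetIl.
  by rewrite -indep_relabel eS.
have [S /andP[SU iS] <-] := isol_on_attained Y1 U.
rewrite -(card_imset _ relabel_inj); apply: leq_isol_on; first exact: imsetS.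
by rewrite indep_relabel.
Qed.

Lemma br_on_relabel (U : {set 'I_m1 * 'I_n1}) :
  U \subset nonzero Y1 -> br_on Y2 (relabel @: U) = br_on Y1 U.
Proof.
move=> Unz; have relUnz : relabel @: U \subset nonzero Y2.
  apply/subsetP=> _ /imsetP[u uU ->]; move/subsetP: Unz => /(_ u uU).
  by rewrite !inE zero_pattern.
apply/eqP; rewrite eqn_leq; apply/andP; split.
  have [F /andP[/forallP rF /forallP cF] <-] := br_on_attained Unz.
  pose img (R : {set 'I_m1} * {set 'I_n1}) := (f @: R.1, g @: R.2).
  apply: leq_trans _ (leq_imset_card img F).
  apply: br_on_min; apply/andP; split; apply/forallP.
    move=> R'; apply/implyP=> /imsetP[R RF ->].
    by apply: rect_imset; exact: (implyP (rF R)).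
  move=> p; apply/implyP=> /imsetP[u uU ->].
  move/implyP: (cF u) => /(_ uU) /existsP[R /andP[RF uR]].
  by apply/existsP; exists (img R); rewrite imset_f // inR_imset.
have [F /andP[/forallP rF /forallP cF] <-] := br_on_attained relUnz.
pose preimg (R : {set 'I_m2} * {set 'I_n2}) := (f @^-1: R.1, g @^-1: R.2).
apply: leq_trans _ (leq_imset_card preimg F).
apply: br_on_min; apply/andP; split; apply/forallP.
  move=> R'; apply/implyP=> /imsetP[R RF ->].
  by apply: rect_preimset; exact: (implyP (rF R)).
move=> u; apply/implyP=> uU.
move/implyP: (cF (relabel u)) => /(_ (imset_f _ uU)) /existsP[R /andP[RF uR]].
by apply/existsP; exists (preimg R); rewrite imset_f // inR_preimset.
Qed.

End Relabel.

Section Submatrix.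
Variables (M N : nat) (Y : gmat M N) (I : {set 'I_M}) (J : {set 'I_N}).

Let zero_pattern_submx a b :
  is0 (submx Y I J a b) = is0 (Y (enum_val a) (enum_val b)).
Proof. by rewrite mxE. Qed.

Lemma relabel_supp_submx :
  relabel enum_val enum_val @: supp (submx Y I J) = supp_in Y I J.
Proof.
apply/setP=> -[i j]; apply/imsetP/idP => [[[a b]]|].
  by rewrite !inE mxE /= => ab [-> ->]; rewrite ab !enum_valP.
rewrite supp_inE /= => /and3P[ij iI jJ].
exists (enum_rank_in iI i, enum_rank_in jJ j); last by rewrite /relabel /= !enum_rankK_in.
by rewrite !inE mxE /= !enum_rankK_in.
Qed.

Lemma isol_num_submx : isol_num (submx Y I J) = isol_on Y (supp_in Y I J).
Proof.
rewrite -relabel_supp_submx.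
by rewrite (isol_on_relabel enum_val_inj enum_val_inj zero_pattern_submx).
Qed.

Lemma br_submx : br (submx Y I J) = br_on Y (supp_in Y I J).
Proof.
rewrite -relabel_supp_submx (br_on_relabel zero_pattern_submx) //.
by rewrite -supp_in_setT supp_in_nonzero.
Qed.

End Submatrix.

Section LRSet.
Variables (a b : nat).
Implicit Types (A : {set 'I_a}) (B : {set 'I_b}).

Definition lrset A B : {set 'I_(a + b)} := lshift b @: A :|: @rshift a b @: B.

Lemma mem_lrset_l A B i : (lshift b i \in lrset A B) = (i \in A).
Proof.
rewrite inE (mem_imset _ _ (@lshift_inj _ _)).
by case: (i \in A) => //=; apply/imsetP=> -[t _ /eqP]; rewrite eq_lrshift.
Qed.

Lemma mem_lrset_r A B t : (rshift a t \in lrset A B) = (t \in B).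
Proof.
rewrite inE (mem_imset _ _ (@rshift_inj _ _)) orbC.
by case: (t \in B) => //=; apply/imsetP=> -[i _ /eqP]; rewrite eq_rlshift.
Qed.

Lemma lrset_split (C : {set 'I_(a + b)}) :
  C = lrset [set i | lshift b i \in C] [set t | rshift a t \in C].
Proof.
by apply/setP=> k; case: (split_ordP k) => k' ->; rewrite ?mem_lrset_l ?mem_lrset_r inE.
Qed.

Lemma lrsetT : lrset setT setT = setT.
Proof.
by apply/setP=> k; case: (split_ordP k) => k' ->; rewrite ?mem_lrset_l ?mem_lrset_r !inE.
Qed.

Lemma mem_lrsetD1r A B t k :
  (k \in lrset A (B :\ t)) = (k != rshift a t) && (k \in lrset A B).
Proof.
case: (split_ordP k) => k' ->; first by rewrite !mem_lrset_l eq_lrshift.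
by rewrite !mem_lrset_r (inj_eq (@rshift_inj _ _)) in_setD1.
Qed.

End LRSet.

Lemma is1_qmark (m n : nat) (B : 'M[bool]_(m, n)) P i j :
  is1 (qmark B P i j) = ((i, j) \notin P) && B i j.
Proof. by rewrite mxE; case: ifP => //; case: (B i j). Qed.

Lemma is0_qmark (m n : nat) (B : 'M[bool]_(m, n)) P i j :
  is0 (qmark B P i j) = ((i, j) \notin P) && ~~ B i j.
Proof. by rewrite mxE; case: ifP => //; case: (B i j). Qed.

Section Stretch.
Variables (m n : nat) (X : 'M[bool]_(m, n)) (Q : {set 'I_m * 'I_n}).
Local Notation q := #|Q|.
Local Notation Sx := (stretch X Q).
Local Notation Sg := (qmark (stretch X Q) set0).
Local Notation lshift2 := (relabel (lshift q) (lshift q)).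
Implicit Types (I : {set 'I_m}) (J : {set 'I_n}) (P : {set 'I_q}) (H : {set 'I_m * 'I_n}).

Lemma size_lexlist : size (lexlist Q) = q.
Proof. by rewrite size_sort cardE. Qed.

Definition lextuple : q.-tuple ('I_m * 'I_n) :=
  @Tuple q _ (lexlist Q) (introT eqP size_lexlist).

(* [qpos t] is the position (l_(t+1), k_(t+1)) of the paper. *)
Definition qpos (t : 'I_q) : 'I_m * 'I_n := tnth lextuple t.

Lemma qnth_qpos (t : 'I_q) : qnth Q t = Some (qpos t).
Proof.
by rewrite /qnth (nth_map (qpos t)) ?size_lexlist // -(tnth_nth _ lextuple).
Qed.

Lemma qpos_inj : injective qpos.
Proof. by apply/tuple_uniqP; rewrite sort_uniq enum_uniq. Qed.

Lemma qpos_in t : qpos t \in Q.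
Proof. by rewrite -mem_enum -(mem_sort (@lexle m n)) (mem_tnth t lextuple). Qed.

Lemma qpos_imset_sub P : qpos @: P \subset Q.
Proof. by apply/subsetP=> _ /imsetP[t _ ->]; apply: qpos_in. Qed.

Lemma qpos_imsetT : qpos @: setT = Q.
Proof.
apply/eqP; rewrite eqEcard qpos_imset_sub card_imset /=; last exact: qpos_inj.
by rewrite cardsT card_ord.
Qed.

Let split_lshift (a b : nat) (i : 'I_a) : split (lshift b i) = inl i :=
  unsplitK (inl _ i).
Let split_rshift (a b : nat) (i : 'I_b) : split (rshift a i) = inr i :=
  unsplitK (inr _ i).

Lemma stretch_ll i j : Sx (lshift q i) (lshift q j) = X i j.
Proof. by rewrite mxE !split_lshift. Qed.

Lemma stretch_lr i t : Sx (lshift q i) (rshift n t) = ((qpos t).1 == i).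
Proof. by rewrite mxE split_lshift split_rshift qnth_qpos. Qed.

Lemma stretch_rl t j : Sx (rshift m t) (lshift q j) = ((qpos t).2 == j).
Proof. by rewrite mxE split_lshift split_rshift qnth_qpos. Qed.

Lemma stretch_rr t t' : Sx (rshift m t) (rshift n t') = (t == t').
Proof. by rewrite mxE !split_rshift. Qed.

Lemma stretch_gadget_row t j :
  Sx (rshift m t) j -> j = lshift q (qpos t).2 \/ j = rshift n t.
Proof.
case: (split_ordP j) => j' ->; first by rewrite stretch_rl => /eqP->; left.
by rewrite stretch_rr => /eqP->; right.
Qed.

Lemma stretch_gadget_col t i :
  Sx i (rshift n t) -> i = lshift q (qpos t).1 \/ i = rshift m t.
Proof.
case: (split_ordP i) => i' ->; first by rewrite stretch_lr => /eqP->; left.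
by rewrite stretch_rr => /eqP->; right.
Qed.

Lemma stretch_gadget_row_sparse t (J : {set 'I_(n + q)}) :
  rshift n t \notin J ->
  #|[set j in J | ~~ is0 (Sg (rshift m t) j)]| <= 1.
Proof.
move=> cJ; apply: (@leq_trans #|[set lshift q (qpos t).2]|); last by rewrite cards1.
apply/subset_leq_card/subsetP=> j; rewrite !inE is0_qmark in_set0 negbK.
by case/andP=> jJ /stretch_gadget_row[->|ej] //; rewrite -ej jJ in cJ.
Qed.

Lemma stretch_gadget_col_sparse t (I : {set 'I_(m + q)}) :
  rshift m t \notin I ->
  #|[set i in I | ~~ is0 (Sg i (rshift n t))]| <= 1.
Proof.
move=> rI; apply: (@leq_trans #|[set lshift q (qpos t).1]|); last by rewrite cards1.
apply/subset_leq_card/subsetP=> i; rewrite !inE is0_qmark in_set0 negbK.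
by case/andP=> iI /stretch_gadget_col[->|ei] //; rewrite -ei iI in rI.
Qed.

(* The support of the submatrix of S^Q(X) on the rows I and gadget rows P,
   and the columns J and gadget columns P, where the positions of H have
   become ?: they need not be covered but may still lie in rectangles. *)
Definition marked_supp I J P H :=
  supp_in Sg (lrset I P) (lrset J P) :\: lshift2 @: H.

Lemma mem_marked_supp I J P H i j :
  ((i, j) \in marked_supp I J P H) =
  [&& (i, j) \notin lshift2 @: H, Sx i j, i \in lrset I P & j \in lrset J P].
Proof. by rewrite inE supp_inE is1_qmark in_set0. Qed.

Lemma marked_supp_nonzero I J P H : marked_supp I J P H \subset nonzero Sg.
Proof. exact: subset_trans (subsetDl _ _) (supp_in_nonzero _ _ _). Qed.

Lemma marked_supp_removal (phi : {set 'I_(m + q) * 'I_(n + q)} -> nat) :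
  (forall I J P H t, t \in P ->
     phi (marked_supp I J P H) = (phi (marked_supp I J (P :\ t) (qpos t |: H))).+1) ->
  forall I J P H,
    phi (marked_supp I J P H) = phi (marked_supp I J set0 (H :|: qpos @: P)) + #|P|.
Proof.
move=> step I J P; have [k] := ubnP #|P|; elim: k P => // k IH P ltPk H.
have [->|[t tP]] := set_0Vmem P; first by rewrite imset0 setU0 cards0 addn0.
rewrite (step _ _ _ _ t tP) IH; last first.
  by rewrite -ltnS (leq_trans _ ltPk) // (cardsD1 t P) tP.
have -> : qpos t |: H :|: qpos @: (P :\ t) = H :|: qpos @: P.
  by rewrite -(setD1K tP) imsetU1 setD1K // setUA (setUC _ H) -setUA.
by rewrite (cardsD1 t P) tP add1n addnS.
Qed.

Hypothesis suppQ : Q \subset bsupp X.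

Lemma X_qpos t : X (qpos t).1 (qpos t).2.
Proof. by move/subsetP: suppQ => /(_ _ (qpos_in t)); rewrite inE. Qed.

Lemma pendant_gadget I J P H t : t \in P ->
  pendant Sg (marked_supp I J P H) (marked_supp I J (P :\ t) (qpos t |: H))
    (rshift m t, rshift n t)
    ([set lshift q (qpos t).1; rshift m t], [set lshift q (qpos t).2; rshift n t]).
Proof.
move=> tP.
have qtH : lshift2 (qpos t) \in lshift2 @: (qpos t |: H) by rewrite imset_f ?setU11.
split=> [|||[i j]|[i j]].
- rewrite mem_marked_supp stretch_rr eqxx !mem_lrset_r tP !andbT.
  by apply/imsetP=> -[[a b] _ /(congr1 fst) /eqP]; rewrite eq_rlshift.
- apply/subsetP=> -[i j]; rewrite in_setD1 !mem_marked_supp !mem_lrsetD1r xpair_eqE.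
  case/and5P=> nH ij /andP[ir iP] _ jP; rewrite (negbTE ir) ij iP jP !andbT /=.
  by apply: contra nH; apply/subsetP/imsetS/subsetUr.
- apply/rectP=> i j; rewrite !inE is0_qmark in_set0 /= negbK.
  case/orP=> /eqP-> /orP[]/eqP->;
    by rewrite ?stretch_ll ?stretch_lr ?stretch_rl ?stretch_rr ?X_qpos.
- rewrite inE !mem_marked_supp !mem_lrsetD1r /inR /= !inE.
  case/andP=> + /and4P[nH ij iP jP]; rewrite ij iP jP !andbT.
  case: (eqVneq i (rshift m t)) => [ei _|ni].
    rewrite orbT; move: ij; rewrite ei.
    by case/stretch_gadget_row=> ->; rewrite eqxx ?orbT.
  case: (eqVneq j (rshift n t)) => [ej _|nj].
    move: ij; rewrite ej => /stretch_gadget_col[ei|ei]; last by rewrite ei eqxx in ni.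
    by rewrite ei eqxx !orbT.
  rewrite !orbF /= !andbT negbK imsetU1 in_setU (negbTE nH) orbF => /set1P[-> ->].
  by rewrite !eqxx.
- rewrite mem_marked_supp !mem_lrsetD1r => /and4P[nH _ /andP[ir _] /andP[jc _]].
  apply/negP=> cx; have := compatible_corner cx; rewrite is0_qmark in_set0 negbK /=.
  case/stretch_gadget_row=> [ej|ej]; last by rewrite ej eqxx in jc.
  move: cx; rewrite compatibleC => /compatible_corner; rewrite is0_qmark in_set0 negbK /=.
  case/stretch_gadget_col=> [ei|ei]; last by rewrite ei eqxx in ir.
  by move: nH; rewrite ei ej qtH.
Qed.

Lemma zero_pattern_stretch H : H \subset Q ->
  forall a b, is0 (qmark X H a b) = is0 (Sg (lshift q a) (lshift q b)).
Proof.
move=> HQ a b; rewrite !is0_qmark in_set0 stretch_ll /=.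
case abH: ((a, b) \in H) => //=.
by move/subsetP: suppQ => /(_ (a, b) (subsetP HQ _ abH)); rewrite inE => ->.
Qed.

Lemma marked_supp0 I J H : H \subset Q ->
  marked_supp I J set0 H = lshift2 @: supp_in (qmark X H) I J.
Proof.
move=> HQ; apply/setP=> -[i j]; rewrite mem_marked_supp; apply/idP/imsetP.
  case: (split_ordP i) => a ->; last by rewrite mem_lrset_r in_set0 !andbF.
  case: (split_ordP j) => b ->; last by rewrite mem_lrset_r in_set0 !andbF.
  rewrite -[(lshift q a, lshift q b)]/(lshift2 (a, b)) !mem_lrset_l stretch_ll.
  rewrite (mem_imset _ _ (relabel_inj (@lshift_inj _ _) (@lshift_inj _ _))).
  case/and4P=> abH ab aI bJ; exists (a, b) => //.
  by rewrite supp_inE is1_qmark abH ab aI bJ.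
case=> -[a b]; rewrite supp_inE is1_qmark /= => /and3P[/andP[abH ab] aI bJ] [-> ->].
rewrite -[(lshift q a, lshift q b)]/(lshift2 (a, b)) !mem_lrset_l stretch_ll.
rewrite aI bJ ab !andbT.
by rewrite (mem_imset _ _ (relabel_inj (@lshift_inj _ _) (@lshift_inj _ _))).
Qed.

Lemma isol_on_stretch_sym I J P :
  isol_on Sg (supp_in Sg (lrset I P) (lrset J P)) =
  isol_num (submx (qmark X (qpos @: P)) I J) + #|P|.
Proof.
have step I' J' P' H t (tP : t \in P') := isol_on_pendant (pendant_gadget I' J' H tP).
transitivity (isol_on Sg (marked_supp I J P set0)).
  by rewrite /marked_supp imset0 setD0.
rewrite (marked_supp_removal step) set0U marked_supp0 ?qpos_imset_sub // isol_num_submx.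
have zeroP := zero_pattern_stretch (qpos_imset_sub P).
by rewrite (isol_on_relabel (@lshift_inj _ _) (@lshift_inj _ _) zeroP).
Qed.

Lemma br_on_stretch_sym I J P :
  br_on Sg (supp_in Sg (lrset I P) (lrset J P)) =
  br (submx (qmark X (qpos @: P)) I J) + #|P|.
Proof.
have step I' J' P' H t (tP : t \in P') :=
  br_on_pendant (pendant_gadget I' J' H tP) (marked_supp_nonzero I' J' P' H).
transitivity (br_on Sg (marked_supp I J P set0)).
  by rewrite /marked_supp imset0 setD0.
rewrite (marked_supp_removal step) set0U marked_supp0 ?qpos_imset_sub // br_submx.
by rewrite (br_on_relabel (zero_pattern_stretch (qpos_imset_sub P))) ?supp_in_nonzero.
Qed.

End Stretch.

Lemma setD1_neqT (T : finType) (A : {set T}) x : A :\ x != setT.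
Proof. by apply/eqP=> /setP/(_ x); rewrite !inE eqxx. Qed.

Section Main.
Variables (m n : nat) (X : 'M[bool]_(m, n)) (Q : {set 'I_m * 'I_n}).
Hypothesis suppQ : Q \subset bsupp X.
Hypothesis minQ : minimally_nonfirm (qmark X Q).
Hypothesis firmP : forall P : {set 'I_m * 'I_n}, P \proper Q -> firm (qmark X P).
Local Notation q := #|Q|.
Local Notation Sg := (qmark (stretch X Q) set0).

Lemma stretch_balanced_sym I J (P : {set 'I_q}) :
  [|| I != setT, J != setT | P != setT] ->
  balanced Sg (supp_in Sg (lrset I P) (lrset J P)).
Proof.
move=> properIJP; rewrite /balanced (isol_on_stretch_sym suppQ) (br_on_stretch_sym suppQ).
congr (_ + _).
have [PT|PT] := eqVneq P setT.
  by rewrite PT qpos_imsetT; apply: minQ.2; rewrite PT eqxx orbF in properIJP.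
apply: firmP; rewrite properEcard qpos_imset_sub card_imset; last exact: qpos_inj.
by rewrite -[X in _ < X]card_ord -cardsT proper_card // properT.
Qed.

Lemma stretch_balanced I J : (I != setT) || (J != setT) -> balanced Sg (supp_in Sg I J).
Proof.
have [k] := ubnP (#|I| + #|J|); elim: k I J => // k IH I J ltIJk properIJ.
have IHrow r : r \in I -> balanced Sg (supp_in Sg (I :\ r) J).
  move=> rI; apply: IH; last by rewrite setD1_neqT.
  by rewrite -ltnS (leq_trans _ ltIJk) // (cardsD1 r I) rI.
have IHcol c : c \in J -> balanced Sg (supp_in Sg I (J :\ c)).
  move=> cJ; apply: IH; last by rewrite setD1_neqT orbT.
  by rewrite -ltnS (leq_trans _ ltIJk) // (cardsD1 c J) cJ addnCA.
have [matched|/forallPn[t]] := boolP [forall t, (rshift m t \in I) == (rshift n t \in J)].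
  set I1 := [set i | lshift q i \in I]; set J1 := [set j | lshift q j \in J].
  set P := [set t | rshift m t \in I].
  have eI : I = lrset I1 P by exact: lrset_split.
  have eJ : J = lrset J1 P.
    rewrite {1}(lrset_split J); congr lrset.
    by apply/setP=> t; rewrite !inE (eqP (forallP matched t)).
  rewrite eI eJ in properIJ *; apply: stretch_balanced_sym.
  apply: contraTT properIJ; rewrite !negb_or !negbK => /and3P[/eqP-> /eqP-> /eqP->].
  by rewrite !lrsetT !eqxx.
case rI: (rshift m t \in I); case cJ: (rshift n t \in J) => // _.
  apply: (balanced_sparse_row rI _ (IHrow _ rI) IHcol).
  by apply: stretch_gadget_row_sparse; rewrite cJ.
apply: (balanced_sparse_col cJ _ (IHcol _ cJ) IHrow).
by apply: stretch_gadget_col_sparse; rewrite rI.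
Qed.

Lemma stretch_isol_lt_br : isol_num Sg < br Sg.
Proof.
rewrite isol_num_supp br_supp -supp_in_setT -(lrsetT m q) -(lrsetT n q).
rewrite (isol_on_stretch_sym suppQ) (br_on_stretch_sym suppQ) qpos_imsetT ltn_add2r.
by rewrite isol_num_submx br_submx supp_in_setT -isol_num_supp -br_supp; case: minQ.
Qed.

End Main.

Theorem theorem3 (m n : nat) (X : 'M[bool]_(m, n)) (Q : {set 'I_m * 'I_n}) :
  Q != set0 ->
  Q \proper bsupp X ->
  minimally_nonfirm (qmark X Q) ->
  (forall P : {set 'I_m * 'I_n}, P \proper Q -> firm (qmark X P)) ->
  minimally_nonfirm (qmark (stretch X Q) set0).
Proof.
move=> _ /andP[suppQ _] minQ firmP; split; first exact: stretch_isol_lt_br.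
by move=> I J properIJ; rewrite isol_num_submx br_submx; exact: stretch_balanced.
Qed.
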